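(* For all integers $m,n\ge1$, $$T_{2m-1,n}(q)=\sum_{r=0}^{m-1}(-1)^{n+r+1}\binom{2m-1}{r}\frac{(1-q^{m-r-\frac12})q^{(m-\frac12)n}}{(1-q)^{2m-1}(1+q^{m-r-\frac12})}+\sum_{r=0}^{m-1}(-1)^r\binom{2m-1}{r}\frac{(1-q^{(2n+1)(m-r-\frac12)})q^{rn}}{(1-q)^{2m-1}(1+q^{m-r-\frac12})}.$$
   Context: $q$ is an indeterminate and $q^{1/2}$ a fixed formal square root of $q$; identities are identities of rational functions in $q^{1/2}$. For integers $m,n\ge1$, $$T_{m,n}(q)=\sum_{k=1}^{n}(-1)^{n-k}\left(\frac{1-q^k}{1-q}\right)^{m}q^{\frac m2(n-k)}.$$ *)

From HB Require Import structures.
From mathcomp Require Import all_boot all_order all_algebra.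
From mathcomp Require Import fraction.
Set Implicit Arguments. Unset Strict Implicit. Unset Printing Implicit Defensive.
Import Order.TTheory GRing.Theory Num.Theory.
Local Open Scope ring_scope.

(* The field of rational functions in one indeterminate over Q; the
   indeterminate plays the role of the formal square root q^{1/2}. *)
Definition RF : fieldType := {fraction {poly rat}}.

Definition sq : RF := @FracField.tofrac _ ('X : {poly rat}).
Definition q : RF := sq ^+ 2.

(* T_{m,n}(q) = sum_{k=1}^n (-1)^(n-k) ((1-q^k)/(1-q))^m q^{(m/2)(n-k)},
   with q^{(m/2)(n-k)} = (q^{1/2})^(m(n-k)). *)
Definition T (m n : nat) : RF :=
  \sum_(1 <= k < n.+1)
    (-1) ^+ (n - k) * ((1 - q ^+ k) / (1 - q)) ^+ m * sq ^+ (m * (n - k)).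

From mathcomp Require Import all_boot all_order all_algebra.
From mathcomp Require Import fraction.
From mathcomp Require Import ring zify.
Import GRing.Theory.
Local Open Scope ring_scope.

(* Both sides satisfy f(n+1) = ((1 - q^(n+1))/(1 - q))^(2m-1) - q^(m-1/2) f(n) and vanish at
   n = 0.  For the right-hand side, the first sum solves the homogeneous recurrence, while
   pairing the binomial terms r and 2m-1-r of (1 - x)^(2m-1) reduces the second sum to the
   identity (1 - u^(2n+3)) + u (1 - u^(2n+1)) = (1 + u)(1 - u^(2n+2)), with u = q^(m-r-1/2). *)

Lemma exprBn_odd_pair (R : comNzRingType) (x : R) (m : nat) : (0 < m)%N ->
  (1 - x) ^+ (2 * m - 1) =
    \sum_(0 <= r < m) (-1) ^+ r * ('C(2 * m - 1, r))%:R * (x ^+ r - x ^+ (2 * m - 1 - r)).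
Proof.
move=> m_gt0; set M := (2 * m - 1)%N.
rewrite exprBn (_ : M.+1 = m + m)%N; last by rewrite /M; lia.
rewrite -(big_mkord xpredT (fun i => ((-1) ^+ i * 1 ^+ (M - i) * x ^+ i) *+ 'C(M, i))).
rewrite (@big_cat_nat _ _ _ m) ?leq_addr //= -{2}[m]add0n big_addn addnK.
rewrite [X in _ + X]big_nat_rev /= add0n -big_split /=.
apply: eq_big_nat => i /andP[_ lt_im].
have -> : (m - i.+1 + m = M - i)%N by rewrite /M; lia.
have -> : (M - (M - i) = i)%N by rewrite /M; lia.
rewrite bin_sub; last by rewrite /M; lia.
rewrite !expr1n !mulr1.
have -> : (-1) ^+ (M - i) = - (-1) ^+ i :> R.
  rewrite (_ : M - i = (m - 1 - i).*2 + i.+1)%N; last by rewrite /M; lia.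
  by rewrite -signr_odd oddD odd_double oddS /= signrN signr_odd.
rewrite !mulr_natr; ring.
Qed.

Lemma one_add_sq_pow_neq0 d : (0 < d)%N -> 1 + sq ^+ d != 0.
Proof.
move=> d_gt0; rewrite /sq -rmorphXn -tofrac1 -tofracD tofrac_eq0.
apply/eqP => /(congr1 (horner^~ 0)) /eqP.
by rewrite !hornerE expr0n eqn0Ngt d_gt0 addr0 oner_eq0.
Qed.

Lemma T0 M : T M 0 = 0.
Proof. by rewrite /T big_geq. Qed.

Lemma TS M n : T M n.+1 = ((1 - q ^+ n.+1) / (1 - q)) ^+ M - sq ^+ M * T M n.
Proof.
rewrite /T big_nat_recr //= subnn muln0 !expr0 mul1r mulr1 addrC; congr (_ + _).
rewrite mulr_sumr -sumrN; apply: eq_big_nat => k /andP[_ lt_kn].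
rewrite subSn // exprS mulnS exprD; ring.
Qed.

Definition alt_sum (m n : nat) : RF :=
  \sum_(0 <= r < m)
    (-1) ^+ (n + r + 1) * ('C(2 * m - 1, r))%:R *
      ((1 - sq ^+ (2 * (m - r) - 1)) * sq ^+ ((2 * m - 1) * n)
       / ((1 - q) ^+ (2 * m - 1) * (1 + sq ^+ (2 * (m - r) - 1)))).

Definition geom_sum (m n : nat) : RF :=
  \sum_(0 <= r < m)
    (-1) ^+ r * ('C(2 * m - 1, r))%:R *
      ((1 - sq ^+ ((2 * n + 1) * (2 * (m - r) - 1))) * sq ^+ (2 * (r * n))
       / ((1 - q) ^+ (2 * m - 1) * (1 + sq ^+ (2 * (m - r) - 1)))).

Lemma alt_sum0 m : alt_sum m 0 = - geom_sum m 0.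
Proof.
rewrite -sumrN; apply: eq_bigr => r _.
by rewrite !muln0 add0n addn1 exprS mul1n !mulN1r !mulNr.
Qed.

Lemma alt_sumS m n : alt_sum m n.+1 = - (sq ^+ (2 * m - 1) * alt_sum m n).
Proof.
rewrite mulr_sumr -sumrN; apply: eq_bigr => r _.
rewrite !addSn exprS mulnS (exprD sq); ring.
Qed.

Lemma odd_geom_step (F : fieldType) (s P : F) (r d n : nat) : 1 + s ^+ d != 0 ->
  (1 - s ^+ ((2 * n.+1 + 1) * d)) * s ^+ (2 * (r * n.+1)) / (P * (1 + s ^+ d))
  + s ^+ (r * 2 + d) * ((1 - s ^+ ((2 * n + 1) * d)) * s ^+ (2 * (r * n)) / (P * (1 + s ^+ d)))
  = ((s ^+ 2) ^+ n.+1 ^+ r - (s ^+ 2) ^+ n.+1 ^+ (r + d)) / P.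
Proof.
move=> nz_u; have [->|nz_P] := eqVneq P 0; first by rewrite !(mul0r, invr0, mulr0, addr0).
set u := s ^+ d; set t := s ^+ r.
have pow_ut k a b c e : k = (d * n * a + d * b + r * n * c + r * e)%N ->
    s ^+ k = (u ^+ n) ^+ a * u ^+ b * ((t ^+ n) ^+ c * t ^+ e).
  by move->; rewrite -!exprM -!exprD; congr (_ ^+ _); lia.
rewrite -!exprM (pow_ut _ 2 3 0 0)%N 1?(pow_ut (2 * (r * n.+1)) 0 0 2 2)%N
  1?(pow_ut (r * 2 + d) 0 1 0 2)%N 1?(pow_ut ((2 * n + 1) * d) 2 1 0 0)%N
  1?(pow_ut (2 * (r * n)) 0 0 2 0)%N 1?(pow_ut (2 * (n.+1 * r)) 0 0 2 2)%N
  1?(pow_ut (2 * (n.+1 * (r + d))) 2 2 2 2)%N; try lia.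
by field; rewrite nz_u nz_P.
Qed.

Lemma geom_sumS m n : (0 < m)%N ->
  geom_sum m n.+1 = ((1 - q ^+ n.+1) / (1 - q)) ^+ (2 * m - 1) - sq ^+ (2 * m - 1) * geom_sum m n.
Proof.
move=> m_gt0; apply/eqP; rewrite eq_sym subr_eq; apply/eqP.
rewrite mulr_sumr -big_split expr_div_n exprBn_odd_pair // mulr_suml /=.
apply: eq_big_nat => r /andP[_ lt_rm].
rewrite [X in _ = _ + X]mulrCA -mulrDr.
rewrite (_ : 2 * m - 1 - r = r + (2 * (m - r) - 1))%N; last by lia.
rewrite (_ : 2 * m - 1 = r * 2 + (2 * (m - r) - 1))%N; last by lia.
by rewrite odd_geom_step ?mulrA // one_add_sq_pow_neq0 //; lia.
Qed.

Theorem lemma2p3 (m n : nat) : (1 <= m)%N -> (1 <= n)%N ->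
  T (2 * m - 1) n =
    \sum_(0 <= r < m)
      (-1) ^+ (n + r + 1) * ('C(2 * m - 1, r))%:R *
        ((1 - sq ^+ (2 * (m - r) - 1)) * sq ^+ ((2 * m - 1) * n)
         / ((1 - q) ^+ (2 * m - 1) * (1 + sq ^+ (2 * (m - r) - 1))))
  + \sum_(0 <= r < m)
      (-1) ^+ r * ('C(2 * m - 1, r))%:R *
        ((1 - sq ^+ ((2 * n + 1) * (2 * (m - r) - 1))) * sq ^+ (2 * (r * n))
         / ((1 - q) ^+ (2 * m - 1) * (1 + sq ^+ (2 * (m - r) - 1)))).
Proof.
move=> m_gt0 _; rewrite -/(alt_sum m n) -/(geom_sum m n).
elim: n => [|n IHn]; first by rewrite T0 alt_sum0 addNr.
by rewrite TS IHn alt_sumS geom_sumS // mulrDr opprD addrCA.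
Qed.
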